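(* Consider the discrete-time system $x_{k+1}=A_kx_k+b_ku_k$ ($k\in\mathbb{Z}$) with $A_k\in\mathbb{R}^{n\times n}$, $b_k\in\mathbb{R}^{n\times1}$, and for $k\in\mathbb{Z}$ let $W_k=[\,b_k,\ A_kb_{k-1},\ A_kA_{k-1}b_{k-2},\ \dots,\ A_k\cdots A_{k-n+2}b_{k-n+1}\,]$. The system is completely controllable if and only if $W_k$ is nonsingular for every $k\in\mathbb{Z}$.
   Context: Complete controllability: for every $k\in\mathbb{Z}$ and every $\xi_s,\xi_f\in\mathbb{R}^n$ there are controls $u_k,\dots,u_{k+n-1}$ such that $x_k=\xi_s$ implies $x_{k+n}=\xi_f$. *)

From mathcomp Require Import all_boot all_order all_algebra.
From mathcomp Require Import reals.
Set Implicit Arguments. Unset Strict Implicit. Unset Printing Implicit Defensive.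
Import Order.TTheory GRing.Theory Num.Theory.
Local Open Scope ring_scope.

Section LTV.
Variables (R : realType) (n : nat).
Variables (A : int -> 'M[R]_n) (b : int -> 'cV[R]_n).

Fixpoint traj (u : int -> R) (k0 : int) (xi : 'cV[R]_n) (m : nat) : 'cV[R]_n :=
  match m with
  | 0 => xi
  | m'.+1 => A (k0 + m'%:Z) *m traj u k0 xi m' + u (k0 + m'%:Z) *: b (k0 + m'%:Z)
  end.

Definition completely_controllable : Prop :=
  forall (k : int) (xi_s xi_f : 'cV[R]_n),
    exists u : int -> R, traj u k xi_s n = xi_f.

Fixpoint Aprod (k : int) (j : nat) : 'M[R]_n :=
  match j with
  | 0 => 1%:M
  | j'.+1 => Aprod k j' *m A (k - j'%:Z)
  end.

Definition Wmx (k : int) : 'M[R]_n :=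
  \matrix_(i < n, j < n) (Aprod k j *m b (k - (j : nat)%:Z)) i 0.

End LTV.

From mathcomp Require Import all_boot all_order all_algebra.
From mathcomp Require Import reals zify.
Import GRing.Theory Num.Theory.
Local Open Scope ring_scope.

(* By variation of constants, n steps of the system started at time k0 give
   x_{k+1} = A_k ... A_{k0} x_{k0} + W_k (u_k, u_{k-1}, ..., u_{k0})^T with
   k = k0 + n - 1.  The endpoints reachable from x_{k0} thus form a translate
   of the column space of W_k, so complete controllability says exactly that
   every W_k is surjective, i.e. nonsingular. *)

Lemma unitmx_surjective (F : fieldType) m (M : 'M[F]_m) :
  M \in unitmx <-> forall y : 'cV_m, exists v, M *m v = y.
Proof.
split=> [Munit y | Msurj].
  by exists (invmx M *m y); rewrite mulmxA mulmxV ?mul1mx.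
rewrite -unitmx_tr -row_full_unit -sub1mx; apply/row_subP => i.
have [v Mv] := Msurj (row i 1%:M)^T.
by rewrite -[row i _]trmxK -Mv trmx_mul submxMl.
Qed.

Section LTV.
Variables (R : realType) (n : nat).
Variables (A : int -> 'M[R]_n) (b : int -> 'cV[R]_n).

Lemma Aprod_recl k j : Aprod A k j.+1 = A k *m Aprod A (k - 1) j.
Proof.
elim: j => [|j IHj]; first by rewrite /= subr0 mul1mx mulmx1.
rewrite -[LHS]/(Aprod A k j.+1 *m A (k - j.+1%:Z)) IHj -mulmxA [Aprod _ _ j.+1]/=.
by congr (_ *m (_ *m A _)); lia.
Qed.

Lemma traj_sum u k0 xi m (k := k0 + m%:Z - 1) :
  traj A b u k0 xi m = Aprod A k m *m xi
    + \sum_(j < m) u (k - j%:Z) *: (Aprod A k j *m b (k - j%:Z)).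
Proof.
rewrite {}/k; elim: m => [|m IHm]; first by rewrite /= mul1mx big_ord0 addr0.
rewrite [LHS]/= IHm (_ : k0 + m.+1%:Z - 1 = k0 + m%:Z); last by lia.
set k := k0 + m%:Z.
rewrite big_ord_recl subr0 mul1mx Aprod_recl -mulmxA mulmxDr mulmx_sumr.
rewrite -addrA; congr (_ + _); rewrite addrC; congr (_ + _).
apply: eq_bigr => j _; rewrite Aprod_recl -scalemxAr mulmxA.
by rewrite (_ : k - (bump 0 j)%:Z = k - 1 - j%:Z) //; rewrite /bump /=; lia.
Qed.

Lemma Wmx_mulmx k (v : 'cV[R]_n) :
  Wmx A b k *m v = \sum_(j < n) v j 0 *: (Aprod A k j *m b (k - j%:Z)).
Proof.
apply/matrixP => i l; rewrite !mxE summxE; apply: eq_bigr => j _.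
by rewrite !mxE (ord1 l) mulrC.
Qed.

Definition input_col (k : int) (u : int -> R) : 'cV[R]_n :=
  \col_(j < n) u (k - j%:Z).

Lemma traj_Wmx u k0 xi (k := k0 + n%:Z - 1) :
  traj A b u k0 xi n = Aprod A k n *m xi + Wmx A b k *m input_col k u.
Proof.
rewrite traj_sum Wmx_mulmx; congr (_ + _).
by apply: eq_bigr => j _; rewrite mxE.
Qed.

(* The input u_t = v_{k-t} for 0 <= k - t < n, and 0 at all other times. *)
Definition input_of (k : int) (v : 'cV[R]_n) (t : int) : R :=
  if k - t is Posz j then oapp (fun i : 'I_n => v i 0) 0 (insub j) else 0.

Lemma input_colK k v : input_col k (input_of k v) = v.
Proof.
apply/colP => j; rewrite mxE /input_of.
by rewrite (_ : k - (k - j%:Z) = j%:Z) ?valK //; lia.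
Qed.

Lemma controllable_Wmx_surjective :
  completely_controllable A b <->
  forall k (y : 'cV[R]_n), exists v, Wmx A b k *m v = y.
Proof.
split=> [ctrl k y | Wsurj k0 xi_s xi_f].
  have [u] := ctrl (k - n%:Z + 1) 0 y.
  rewrite traj_Wmx mulmx0 add0r (_ : k - n%:Z + 1 + n%:Z - 1 = k); last by lia.
  by exists (input_col k u).
set k := k0 + n%:Z - 1.
have [v Wv] := Wsurj k (xi_f - Aprod A k n *m xi_s).
by exists (input_of k v); rewrite traj_Wmx input_colK Wv addrC subrK.
Qed.

End LTV.

Theorem claim1 (R : realType) (n : nat)
    (A : int -> 'M[R]_n) (b : int -> 'cV[R]_n) :
  completely_controllable A b <-> (forall k : int, Wmx A b k \in unitmx).
Proof.
rewrite controllable_Wmx_surjective.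
by split=> W k; apply/unitmx_surjective/W.
Qed.
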